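(* The Eigenvector Method violates invariance to $\alpha$-transformation on a triad: there exist $n$ (indeed $n=4$) and pairwise comparison matrices $\mathbf{A},\hat{\mathbf{A}}\in\mathcal{A}^{n\times n}$ such that $\hat{\mathbf{A}}$ is obtained from $\mathbf{A}$ by an $\alpha$-transformation on a triad but the Eigenvector Method weight vectors of $\mathbf{A}$ and $\hat{\mathbf{A}}$ differ.
   Context: A pairwise comparison matrix of size $n$ is a matrix $\mathbf{A} = [a_{i,j}]$ with positive entries and $a_{j,i} = 1/a_{i,j}$ for all $i,j$; $\mathcal{A}^{n\times n}$ denotes the set of these. The Eigenvector Method assigns to $\mathbf{A}$ the vector $\mathbf{w}$ with positive entries, $\sum_i w_i = 1$, and $\mathbf{A}\mathbf{w} = \lambda_{\max}\mathbf{w}$, where $\lambda_{\max}$ is the Perron (maximal) eigenvalue of $\mathbf{A}$. An $\alpha$-transformation on the triad $(i,j,k)$ (three distinct indices), with $\alpha>0$, maps $\mathbf{A}$ to $\hat{\mathbf{A}}$ with $\hat a_{i,j} = \alpha a_{i,j}$, $\hat a_{j,i} = a_{j,i}/\alpha$, $\hat a_{j,k} = \alpha a_{j,k}$, $\hat a_{k,j} = a_{k,j}/\alpha$, $\hat a_{k,i} = \alpha a_{k,i}$, $\hat a_{i,k} = a_{i,k}/\alpha$, all other entries unchanged. *)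

From HB Require Import structures.
From mathcomp Require Import all_boot all_order all_algebra.
From mathcomp Require Import reals.
Set Implicit Arguments. Unset Strict Implicit. Unset Printing Implicit Defensive.
Import Order.TTheory GRing.Theory Num.Theory.
Local Open Scope ring_scope.

Section Defs.
Variable R : realType.

Definition is_pcm (n : nat) (A : 'M[R]_n) : Prop :=
  forall i j : 'I_n, 0 < A i j /\ A j i = (A i j)^-1.

Definition alpha_transform (n : nat) (A : 'M[R]_n) (i j k : 'I_n) (alpha : R)
  : 'M[R]_n :=
  \matrix_(r, c)
    if [|| (r == i) && (c == j), (r == j) && (c == k) | (r == k) && (c == i)]
    then alpha * A r c
    else if [|| (r == j) && (c == i), (r == k) && (c == j) | (r == i) && (c == k)]
    then A r c / alpha
    else A r c.

Definition is_eigenvalue (n : nat) (A : 'M[R]_n) (l : R) : Prop :=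
  exists v : 'cV[R]_n, v != 0 /\ A *m v = l *: v.

Definition is_lambda_max (n : nat) (A : 'M[R]_n) (l : R) : Prop :=
  is_eigenvalue A l /\ forall m, is_eigenvalue A m -> m <= l.

Definition EM_weight (n : nat) (A : 'M[R]_n) (w : 'cV[R]_n) : Prop :=
  (forall i, 0 < w i 0) /\ \sum_i w i 0 = 1 /\
  exists l, is_lambda_max A l /\ A *m w = l *: w.

End Defs.

(* With J the all-ones 4x4 matrix, A := alpha_transform J 0 1 2 (1/2) is turned back
   into J by the alpha-transformation with alpha = 2 on the same triad.  The weight of
   J is uniform, because J w = (sum w) 1.  A uniform vector is an eigenvector of A only
   if all row sums of A agree, and they do not (9/2 on the triad rows, 4 on the last
   row), so the two weights differ.  The Perron vector of A is (1,1,1,y) up to scaling,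
   where symmetry of the triad and the last row give y^2 + 5/2 y = 3; that a positive
   eigenvector of a nonnegative matrix carries the maximal real eigenvalue is the
   Collatz-Wielandt comparison below. *)

From mathcomp Require Import all_boot all_order all_algebra.
From mathcomp Require Import reals.
From mathcomp Require Import ring lra.

Set Implicit Arguments.
Unset Strict Implicit.
Unset Printing Implicit Defensive.
Import Order.TTheory GRing.Theory Num.Theory.
Local Open Scope ring_scope.

Section AlphaTransform.
Variables (R : realType) (n : nat).
Implicit Types (A : 'M[R]_n) (i j k : 'I_n).

Lemma alpha_transformK A i j k (alpha : R) : alpha != 0 ->
  alpha_transform (alpha_transform A i j k alpha^-1) i j k alpha = A.
Proof.
move=> alpha0; apply/matrixP => r c; rewrite !mxE.
set up := [|| (r == i) && (c == j), _ | _]; set down := [|| (r == j) && (c == i), _ | _].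
by case: up; case: down; rewrite /= ?mulVKf ?invrK ?mulfK.
Qed.

Lemma alpha_transform_pcm A i j k (alpha : R) :
  [/\ i != j, j != k & i != k] -> 0 < alpha -> is_pcm A ->
  is_pcm (alpha_transform A i j k alpha).
Proof.
move=> [ij jk ik] alpha_gt0 pcmA r c; rewrite !mxE.
have [Arc_gt0 ArcV] := pcmA r c.
set up := [|| (r == i) && (c == j), _ | _]; set down := [|| (r == j) && (c == i), _ | _].
have -> : [|| (c == i) && (r == j), (c == j) && (r == k) | (c == k) && (r == i)] = down.
  by rewrite /down ![(c == _) && _]andbC.
have -> : [|| (c == j) && (r == i), (c == k) && (r == j) | (c == i) && (r == k)] = up.
  by rewrite /up ![(c == _) && _]andbC.
have : ~~ (up && down).
  rewrite /up /down; apply/negP => /andP[].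
  by case/or3P => /andP[/eqP-> /eqP->]; rewrite ?(eq_sym j i) ?(eq_sym k j) ?(eq_sym k i)
    ?(negbTE ij) ?(negbTE jk) ?(negbTE ik) ?andbF.
by case: up; case: down => //= _; rewrite ArcV;
  split; rewrite ?mulr_gt0 ?divr_gt0 ?invr_gt0 // invfM ?invrK mulrC.
Qed.

End AlphaTransform.

Section PositiveEigenvector.
Variables (R : realType) (n : nat) (A : 'M[R]_n.+1).
Hypothesis A_ge0 : forall i j, 0 <= A i j.

(* Scale w so that it dominates |v| with equality at some index i0, then compare
   row i0 of A v = m v with row i0 of A w = l w. *)
Lemma eigenvalue_le_pos_eigenvalue (w : 'cV[R]_n.+1) l m :
  (forall i, 0 < w i 0) -> A *m w = l *: w -> is_eigenvalue A m -> m <= l.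
Proof.
move=> w_gt0 Aw [v [v_neq0 Av]].
pose t i := `|v i 0| / w i 0.
have [i0 _ t_max] := @arg_maxP _ _ _ ord0 predT t isT.
have v_le j : `|v j 0| <= t i0 * w j 0 by rewrite -ler_pdivrMr //; exact: t_max.
have vi0_gt0 : 0 < `|v i0 0|.
  rewrite normr_gt0; apply: contraNneq v_neq0 => vi0.
  apply/eqP/matrixP => j k; rewrite ord1 mxE; apply/normr0_eq0/eqP.
  by rewrite eq_le normr_ge0 andbT; have := v_le j; rewrite /t vi0 normr0 !mul0r.
have : `|m| * `|v i0 0| <= l * `|v i0 0|.
  have := congr1 (fun M : 'cV_n.+1 => M i0 0) Av.
  have := congr1 (fun M : 'cV_n.+1 => M i0 0) Aw.
  rewrite !mxE => Awi0 Avi0; rewrite -normrM -Avi0.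
  apply: (le_trans (ler_norm_sum _ _ _)).
  apply: (@le_trans _ _ (\sum_j A i0 j * (t i0 * w j 0))).
    by apply: ler_sum => j _; rewrite normrM ger0_norm // ler_wpM2l.
  under eq_bigr do rewrite mulrCA.
  by rewrite -mulr_sumr Awi0 mulrCA /t divfK ?gt_eqF.
rewrite ler_pM2r // => /(le_trans (ler_norm m)); exact.
Qed.

Lemma EM_weight_pos_eigenvector (v : 'cV[R]_n.+1) l :
  (forall i, 0 < v i 0) -> A *m v = l *: v -> EM_weight A ((\sum_i v i 0)^-1 *: v).
Proof.
move=> v_gt0 Av; set w := _ *: v.
have sum_gt0 : 0 < \sum_i v i 0.
  by rewrite (bigD1 ord0) //= ltr_pwDl // sumr_ge0 // => i _; apply: ltW.
have w_gt0 i : 0 < w i 0 by rewrite mxE mulr_gt0 ?invr_gt0.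
have Aw : A *m w = l *: w by rewrite -scalemxAr Av !scalerA mulrC.
split=> //; split.
  by rewrite /w; under eq_bigr do rewrite mxE; rewrite -mulr_sumr mulVf ?gt_eqF.
exists l; split=> //; split=> [|m]; last exact: eigenvalue_le_pos_eigenvalue w_gt0 Aw.
by exists w; split=> //; apply: contraTneq (w_gt0 ord0) => ->; rewrite mxE ltxx.
Qed.

End PositiveEigenvector.

Lemma row_sum_const_eigenvector (R : idomainType) m n (A : 'M[R]_(m, n)) c l i :
  c != 0 -> A *m const_mx c = l *: (const_mx c : 'cV_m) -> \sum_j A i j = l.
Proof.
move=> c_neq0 /(congr1 (fun M : 'cV_m => M i 0)); rewrite !mxE.
by under eq_bigr do rewrite mxE; rewrite -mulr_suml => /(mulIf c_neq0).
Qed.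

Section AllOnes.
Variables (R : realType) (n : nat).
Local Notation J := (const_mx 1 : 'M[R]_n.+1).

Lemma pcm_const1 : is_pcm J.
Proof. by move=> i j; rewrite !mxE invr1 ltr01. Qed.

Lemma EM_weight_const1 : EM_weight J (const_mx (n.+1)%:R^-1).
Proof.
have J1 : J *m const_mx 1 = (n.+1)%:R *: (const_mx 1 : 'cV_n.+1).
  apply/matrixP => i k; rewrite !mxE; under eq_bigr do rewrite !mxE mulr1.
  by rewrite sumr_const card_ord mulr1.
have J_ge0 i j : 0 <= J i j by rewrite mxE.
have one_gt0 i : 0 < (const_mx 1 : 'cV[R]_n.+1) i 0 by rewrite mxE.
have := EM_weight_pos_eigenvector J_ge0 one_gt0 J1.
congr EM_weight; apply/matrixP => i k; rewrite !mxE mulr1.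
by under eq_bigr do rewrite mxE; rewrite sumr_const card_ord.
Qed.

Lemma EM_weight_const1_const w : EM_weight J w -> w = const_mx (w ord0 0).
Proof.
move=> [_ [w_sum [l [_ Jw]]]].
have Jw_entry i : l * w i 0 = 1.
  have := congr1 (fun M : 'cV_n.+1 => M i 0) Jw; rewrite !mxE => <-.
  by under eq_bigr do rewrite mxE mul1r.
have l_neq0 : l != 0.
  by apply: contra_eq_neq (Jw_entry ord0) => ->; rewrite mul0r eq_sym oner_eq0.
by apply/matrixP => i k; rewrite ord1 mxE; apply: (mulfI l_neq0); rewrite !Jw_entry.
Qed.

End AllOnes.

Section TriadExample.
Variable R : realType.

Definition triad_pcm : 'M[R]_4 := alpha_transform (const_mx 1) 0 1 2 2^-1.

Lemma triad_pcm_pcm : is_pcm triad_pcm.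
Proof. by apply: alpha_transform_pcm; rewrite ?invr_gt0 //; apply: pcm_const1. Qed.

Lemma triad_pcm_row_sums_neq : \sum_j triad_pcm 0 j != \sum_j triad_pcm ord_max j.
Proof.
rewrite !big_ord_recl !big_ord0 !mxE /= invrK.
by apply/negP => /eqP; lra.
Qed.

Definition triad_eigenvector (y : R) : 'cV[R]_4 := \col_i (if i == ord_max then y else 1).

Lemma triad_eigenvector_eigen y : y ^+ 2 + 5 / 2 * y = 3 ->
  triad_pcm *m triad_eigenvector y = (7 / 2 + y) *: triad_eigenvector y.
Proof.
move=> y_root; apply/matrixP => i k; rewrite ord1 !mxE !big_ord_recl big_ord0 /= !mxE.
by case: i => [[|[|[|[|i]]]] i_lt] //=; rewrite ?invrK; nra.
Qed.

Lemma EM_weight_triad_pcm : exists w, EM_weight triad_pcm w.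
Proof.
pose y : R := (Num.sqrt 73 - 5) / 4.
have sqrt73_sq : Num.sqrt 73 ^+ 2 = 73 :> R by rewrite sqr_sqrtr.
have sqrt73_ge0 := sqrtr_ge0 (73 : R).
have y_gt0 : 0 < y by rewrite /y; nra.
have y_root : y ^+ 2 + 5 / 2 * y = 3 by rewrite /y; nra.
eexists; apply: EM_weight_pos_eigenvector (triad_eigenvector_eigen y_root).
  by move=> i j; apply: ltW; have [] := triad_pcm_pcm i j.
by move=> i; rewrite mxE; case: ifP.
Qed.

End TriadExample.

Theorem proposition3p2 (R : realType) :
  exists (A Ahat : 'M[R]_4) (i j k : 'I_4) (alpha : R),
    [/\ i != j, j != k & i != k] /\ 0 < alpha /\
    is_pcm A /\ is_pcm Ahat /\ Ahat = alpha_transform A i j k alpha /\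
    (exists w : 'cV[R]_4, EM_weight A w) /\
    (exists w : 'cV[R]_4, EM_weight Ahat w) /\
    (forall w what : 'cV[R]_4, EM_weight A w -> EM_weight Ahat what -> w != what).
Proof.
exists (triad_pcm R), (const_mx 1), 0, 1, 2, 2.
split; first by [].
split; first by rewrite ltr0n.
split; first exact: triad_pcm_pcm.
split; first exact: pcm_const1.
split; first by rewrite alpha_transformK // pnatr_eq0.
split; first exact: EM_weight_triad_pcm.
split; first by eexists; apply: EM_weight_const1.
move=> w what [_ [_ [l [_ Aw]]]] EM_what; have [what_gt0 _] := EM_what.
apply: contraTneq (triad_pcm_row_sums_neq R) => w_what.
rewrite w_what (EM_weight_const1_const EM_what) in Aw.
have row_sum i := row_sum_const_eigenvector i (lt0r_neq0 (what_gt0 ord0)) Aw.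
by rewrite !row_sum eqxx.
Qed.
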